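(* Let $\mathcal{Z}$ be a data space with unknown distribution $\mu$, let $S=(Z_1,\dots,Z_n)$ have i.i.d. entries $Z_i\sim\mu$, let the learning algorithm be a Markov kernel $P_{W|S}$ producing a hypothesis $W$ in a hypothesis class $\mathcal{W}$, with $P_W$ the marginal of $W$ and $P_{W,Z_i}$ the joint law of $(W,Z_i)$. Let $l:\mathcal{W}\times\mathcal{Z}\to\mathbb{R}^+$ be a loss function and assume that for every $i=1,\dots,n$, $l(W,Z_i)$ is $\sigma$-subgaussian when $(W,Z_i)$ is distributed according to $\frac{P_{W,Z_i}+P_W\otimes\mu}{2}$. Then $$|\overline{\text{gen}}(P_{W|S},\mu)|\le 2\sigma\sqrt{2\log 2}.$$
   Context: A random variable $X$ is $\sigma$-subgaussian if $\mathbb{E}[e^{\lambda(X-\mathbb{E}X)}]\le e^{\lambda^2\sigma^2/2}$ for all $\lambda\in\mathbb{R}$. Expected generalization error: $\overline{\text{gen}}(P_{W|S},\mu)=\mathbb{E}_{P_{W,S}}\big[\int l(W,z)\,\mu(dz)-\frac1n\sum_{i=1}^n l(W,Z_i)\big]$. $\log$ is the natural logarithm. *)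

From HB Require Import structures.
From mathcomp Require Import all_boot all_order all_algebra.
From mathcomp Require Import all_classical all_reals all_analysis.
Set Implicit Arguments. Unset Strict Implicit. Unset Printing Implicit Defensive.
Import Order.TTheory GRing.Theory Num.Theory.
Local Open Scope classical_set_scope.
Local Open Scope ring_scope.

Definition subgaussian d (T : measurableType d) (R : realType)
    (Q : set T -> \bar R) (f : T -> R) (sigma : R) : Prop :=
  Q.-integrable setT (EFin \o f) /\
  forall lam : R,
    (\int[Q]_x (expR (lam * (f x - fine (\int[Q]_y (f y)%:E))))%:E
      <= (expR (lam ^+ 2 * sigma ^+ 2 / 2))%:E)%E.

Definition mixture d (T : measurableType d) (R : realType)
    (m1 m2 : set T -> \bar R) : set T -> \bar R :=
  fun A => ((2^-1)%:E * (m1 A + m2 A))%E.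

(* The law of the sample S : Omega -> n.-tuple Z is the n-fold product mu^{(x)n},
   i.e. S = (Z_1,...,Z_n) has i.i.d. entries with law mu
   (product rule on all measurable rectangles). *)
Definition iid_sample d dZ (Omega : measurableType d) (Z : measurableType dZ)
    (R : realType) (P : probability Omega R) (n : nat)
    (S : Omega -> n.-tuple Z) (mu : probability Z R) : Prop :=
  forall A : 'I_n -> set Z, (forall i, measurable (A i)) ->
    P [set w | forall i, A i (tnth (S w) i)] = (\prod_(i < n) mu (A i))%E.

Definition generated_by_kernel d dS dW (Omega : measurableType d)
    (TS : measurableType dS) (TW : measurableType dW) (R : realType)
    (P : probability Omega R) (S : Omega -> TS) (W : Omega -> TW)
    (K : R.-pker TS ~> TW) : Prop :=
  forall (A : set TS) (B : set TW), measurable A -> measurable B ->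
    P (S @^-1` A `&` W @^-1` B) = (\int[P]_(w in S @^-1` A) K (S w) B)%E.

Definition exp_gen d dZ dW (Omega : measurableType d) (Z : measurableType dZ)
    (TW : measurableType dW) (R : realType) (P : probability Omega R) (n : nat)
    (S : Omega -> n.-tuple Z) (W : Omega -> TW) (mu : probability Z R)
    (l : TW * Z -> R) : \bar R :=
  (\int[P]_w ((\int[mu]_z (l (W w, z))%:E)
               - (n%:R^-1)%:E * \sum_(i < n) (l (W w, tnth (S w) i))%:E))%E.

From HB Require Import structures.
From mathcomp Require Import all_boot all_order all_algebra.
From mathcomp Require Import all_classical all_reals all_analysis.
From mathcomp Require Import ring lra measurable_realfun.
Set Implicit Arguments. Unset Strict Implicit. Unset Printing Implicit Defensive.
Import Order.TTheory GRing.Theory Num.Theory.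
Local Open Scope classical_set_scope.
Local Open Scope ring_scope.

(* Let Q be the mixture of P_{W,Z_i} and P_W (x) mu, and let P1 be either of
   them. Since P1 <= 2 Q, Jensen's inequality and subgaussianity under Q give
     exp (lam (E_P1 l - E_Q l)) <= E_P1 [exp (lam (l - E_Q l))]
                                <= 2 E_Q [exp (lam (l - E_Q l))]
                                <= 2 exp (lam^2 sigma^2 / 2)
   for every lam, hence |E_P1 l - E_Q l| <= sigma sqrt (2 log 2). So
   E_{P_W (x) mu} l and E_{P_{W,Z_i}} l differ by at most 2 sigma sqrt (2 log 2),
   and the generalization error is the average over i of these differences. *)

Lemma ler_norm_of_quadratic_bound (R : realType) (x s L : R) :
  0 < L -> 0 <= s -> (forall lam, lam * x <= L + lam ^+ 2 * s ^+ 2 / 2) ->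
  `|x| <= s * Num.sqrt (2 * L).
Proof.
move=> L_gt0 s_ge0.
have r_gt0 : 0 < Num.sqrt (2 * L) by rewrite sqrtr_gt0; lra.
have r2 : Num.sqrt (2 * L) ^+ 2 = 2 * L by rewrite sqr_sqrtr //; lra.
set r := Num.sqrt (2 * L) in r_gt0 r2 *.
suff one_sided y : (forall lam, lam * y <= L + lam ^+ 2 * s ^+ 2 / 2) -> y <= s * r.
  move=> xB; rewrite ler_norml lerNl; apply/andP; split; last exact: one_sided.
  by apply: one_sided => lam; rewrite mulrN -mulNr -sqrrN; exact: xB.
move=> yB; have [y_le0|y_gt0] := leP y 0.
  by rewrite (le_trans y_le0) // mulr_ge0 // ltW.
have [s0|s_gt0] := eqVneq s 0.
  have := yB ((L + 1) / y); rewrite s0 mulfVK ?gt_eqF // expr0n /=; lra.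
have {}s_gt0 : 0 < s by rewrite lt_def s_gt0.
(* [lam = r / s] balances the two terms: [L + lam^2 s^2 / 2 = r^2]. *)
have := yB (r / s); rewrite expr_div_n divfK ?sqrf_eq0 ?gt_eqF // r2 => h.
rewrite -(@ler_pM2l _ (r / s)) ?divr_gt0 //.
have -> : r / s * (s * r) = r ^+ 2 by field; rewrite gt_eqF.
lra.
Qed.

Lemma ler_dist_avg (R : realFieldType) (n : nat) (b c : R) (a : 'I_n -> R) :
  (0 < n)%N -> (forall i, `|b - a i| <= c) -> `|b - n%:R^-1 * \sum_(i < n) a i| <= c.
Proof.
move=> n_gt0 dist_le; have n_pos : 0 < n%:R :> R by rewrite ltr0n.
have -> : b - n%:R^-1 * \sum_(i < n) a i = n%:R^-1 * \sum_(i < n) (b - a i).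
  by rewrite sumrB sumr_const card_ord mulrBr -[b *+ n]mulr_natl mulKf ?gt_eqF.
rewrite normrM ger0_norm ?invr_ge0 // ler_pdivrMl //.
apply: le_trans (ler_norm_sum _ _ _) _.
by rewrite mulr_natl -[in c *+ n](card_ord n) -sumr_const ler_sum.
Qed.

Lemma ge0_integrable d (T : measurableType d) (R : realType)
    (mu : {measure set T -> \bar R}) (f : T -> \bar R) :
  measurable_fun setT f -> (forall x, (0 <= f x)%E) ->
  (\int[mu]_x f x < +oo)%E -> mu.-integrable setT f.
Proof.
move=> mf f_ge0 f_fin; apply/integrableP; split => //.
by under eq_integral do rewrite gee0_abs //.
Qed.

Lemma mixtureC (R : realType) d (T : measurableType d) (m1 m2 : set T -> \bar R) :
  mixture m1 m2 = mixture m2 m1.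
Proof. by apply/funext => A; rewrite /mixture addeC. Qed.

Section mixture_measure.
Context (R : realType) d (T : measurableType d) (m1 m2 : {measure set T -> \bar R}).

Lemma mixture_mscale : mixture m1 m2 = mscale (2^-1 : R)%:nng (measure_add m1 m2).
Proof. by apply/funext => A; rewrite /mixture /mscale -measure_addE. Qed.

Local Open Scope ereal_scope.

Lemma ge0_integral_mixture (h : T -> \bar R) :
  measurable_fun [set: T] h -> (forall x, 0 <= h x) ->
  \int[mixture m1 m2]_x h x = 2^-1%:E * (\int[m1]_x h x + \int[m2]_x h x).
Proof.
by move=> mh h0; rewrite mixture_mscale ge0_integral_mscale // ge0_integral_measure_add.
Qed.

Lemma ge0_integral_le_mixture (h : T -> \bar R) :
  measurable_fun [set: T] h -> (forall x, 0 <= h x) ->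
  \int[m1]_x h x <= 2%:E * \int[mixture m1 m2]_x h x.
Proof.
move=> mh h0; rewrite ge0_integral_mixture // muleA -EFinM divff // mul1e.
by rewrite leeDl // integral_ge0.
Qed.

Lemma integrable_mixturel (f : T -> \bar R) :
  (mixture m1 m2).-integrable setT f -> m1.-integrable setT f.
Proof.
rewrite mixture_mscale => /integrableP[mf]; rewrite -mixture_mscale => fint.
apply/integrableP; split => //.
have mabsf : measurable_fun [set: T] (fun x => `|f x|) by exact: measurableT_comp.
apply: le_lt_trans (ge0_integral_le_mixture mabsf (fun x => abse_ge0 (f x))) _.
by rewrite lte_mul_pinfty.
Qed.

End mixture_measure.

Section probability_affine.
Context (R : realType) d (T : measurableType d) (P : probability T R).
Local Open Scope ereal_scope.

Lemma integrable_affine (f : T -> R) (a b : R) :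
  P.-integrable setT (EFin \o f) ->
  P.-integrable setT (fun x => (a * (f x - b))%:E).
Proof.
move=> fint.
have := integrableZl measurableT a (integrableB measurableT fint
  (finite_measure_integrable_cst P b measurableT)).
by apply: eq_integrable => // x _; rewrite /= -EFinB -EFinM.
Qed.

Lemma integral_affine (f : T -> R) (a b : R) :
  P.-integrable setT (EFin \o f) ->
  \int[P]_x (a * (f x - b))%:E = (a * (fine (\int[P]_x (f x)%:E) - b))%:E.
Proof.
move=> fint; have bint := finite_measure_integrable_cst P b measurableT.
rewrite (eq_integral (fun x => a%:E * ((EFin \o f) \- (EFin \o cst b)) x)); last first.
  by move=> x _; rewrite /= -EFinB -EFinM.
rewrite integralZl ?integralB //; last exact: integrableB.
have PT : (P : {measure set T -> \bar R}) [set: T] = 1 := probability_setT P.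
rewrite -[EFin \o cst b]/(cst b%:E) integral_cst // PT mule1.
by rewrite -(fineK (integrable_fin_num _ fint)) // -EFinB -EFinM.
Qed.

Lemma expR_integral_le (f : T -> R) : P.-integrable setT (EFin \o f) ->
  (expR (fine (\int[P]_x (f x)%:E)))%:E <= \int[P]_x (expR (f x))%:E.
Proof.
move=> fint; set m := fine _.
have mexpf : measurable_fun setT (fun x => (expR (f x))%:E).
  apply/measurable_EFinP/measurableT_comp => //.
  by apply/measurable_EFinP; case/integrableP: fint.
have [expf_fin|] := ltP (\int[P]_x (expR (f x))%:E) +oo; last first.
  by rewrite leye_eq => /eqP ->; exact: leey.
have expf_int : P.-integrable setT (fun x => (expR (f x))%:E).
  by apply: ge0_integrable => // x; rewrite lee_fin expR_ge0.
(* the tangent line of [expR] at [m] lies below it *)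
have tangent x : (expR m * (f x - (m - 1)%R))%:E <= (expR (f x))%:E.
  rewrite lee_fin -[X in (_ <= expR X)%R](subrK m) expRD mulrC ler_wpM2r ?expR_ge0 //.
  by have := expR_ge1Dx (f x - m); lra.
apply: le_trans (le_integral _ _ _ (fun x _ => tangent x)) => //.
- by rewrite integral_affine // -/m opprB addrC subrK mulr1.
- exact: integrable_affine.
Qed.

End probability_affine.

Section subgaussian_mixture.
Context (R : realType) d (T : measurableType d) (P1 P2 : probability T R).
Local Open Scope ereal_scope.

Lemma subgaussian_mixture_dev (f : T -> R) (s : R) : (0 <= s)%R ->
  subgaussian (mixture P1 P2) f s ->
  (`|fine (\int[P1]_x (f x)%:E) - fine (\int[mixture P1 P2]_x (f x)%:E)|
     <= s * Num.sqrt (2 * ln 2))%R.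
Proof.
move=> s_ge0 [fint mgf_le].
have f1int := integrable_mixturel fint.
set m := fine (\int[mixture P1 P2]_x (f x)%:E) in mgf_le *.
apply: ler_norm_of_quadratic_bound => // [|lam]; first by rewrite ln_gt0 // ltr1n.
rewrite -ler_expR expRD lnK ?posrE // -lee_fin EFinM.
have := expR_integral_le (integrable_affine lam m f1int).
rewrite integral_affine // => /le_trans; apply.
have mexpg : measurable_fun setT (fun x => (expR (lam * (f x - m)))%:E).
  apply/measurable_EFinP/measurableT_comp => //.
  apply: measurable_funM => //; apply: measurable_funB => //.
  by apply/measurable_EFinP; case/integrableP: f1int.
apply: le_trans (ge0_integral_le_mixture P1 P2 mexpg _) _.
  by move=> x; rewrite lee_fin expR_ge0.
by rewrite lee_pmul2l.
Qed.

End subgaussian_mixture.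

Lemma subgaussian_mixture_dist (R : realType) d (T : measurableType d)
    (P1 P2 : probability T R) (f : T -> R) (s : R) : 0 <= s ->
  subgaussian (mixture P1 P2) f s ->
  `|fine (\int[P1]_x (f x)%:E) - fine (\int[P2]_x (f x)%:E)|
     <= 2 * s * Num.sqrt (2 * ln 2).
Proof.
move=> s_ge0 f_subg.
apply: le_trans (ler_distD (fine (\int[mixture P1 P2]_x (f x)%:E)) _ _) _.
rewrite [X in _ + X]distrC -[2]/(1 + 1) -mulrA mulrDl mul1r.
apply: lerD; first exact: subgaussian_mixture_dev.
rewrite mixtureC; apply: subgaussian_mixture_dev => //.
by rewrite mixtureC.
Qed.

Section generalization_error.
Context (R : realType) d dZ dW (Omega : measurableType d) (P : probability Omega R)
  (Z : measurableType dZ) (TW : measurableType dW) (mu : probability Z R) (n : nat)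
  (S : Omega -> n.-tuple Z) (W : {mfun Omega >-> TW}) (l : TW * Z -> R).
Hypotheses (mS : measurable_fun setT S) (ml : measurable_fun setT l)
  (l_ge0 : forall x, 0 <= l x).
Local Open Scope ereal_scope.

Lemma measurable_fun_hyp_sample i :
  measurable_fun setT (fun w => (W w, tnth (S w) i)).
Proof. exact/measurable_fun_pair/(measurableT_comp (measurable_tnth i) mS). Qed.

Definition hyp_sample i : {mfun Omega >-> (TW * Z)%type} :=
  mfun_Sub (mem_set (measurable_fun_hyp_sample i)).

Let mlE : measurable_fun setT (EFin \o l).
Proof. exact/measurable_EFinP. Qed.

Let lE_ge0 x : 0 <= (EFin \o l) x.
Proof. by rewrite lee_fin. Qed.

Lemma integral_loss_product :
  \int[P]_w \int[mu]_z (l (W w, z))%:E = \int[distribution P W \x mu]_x (l x)%:E.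
Proof.
rewrite (fubini_tonelli1 _ mlE lE_ge0) ge0_integral_pushforward //.
- exact: measurable_fun_fubini_tonelli_F.
- by move=> y _; exact: integral_ge0.
Qed.

Lemma integral_loss_pair i :
  \int[P]_w (l (W w, tnth (S w) i))%:E
  = \int[distribution P (hyp_sample i)]_x (l x)%:E.
Proof.
rewrite (ge0_integral_pushforward (measurable_fun_hyp_sample i)) //.
by move=> y _; exact: lE_ge0.
Qed.

Lemma exp_genE :
  (distribution P W \x mu).-integrable setT (EFin \o l) ->
  (forall i, (distribution P (hyp_sample i)).-integrable setT (EFin \o l)) ->
  exp_gen P S W mu l =
  (fine (\int[distribution P W \x mu]_x (l x)%:E)
   - n%:R^-1 * \sum_(i < n) fine (\int[distribution P (hyp_sample i)]_x (l x)%:E))%:E.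
Proof.
move=> prod_int pair_int.
have hyp_int : P.-integrable setT (fun w => \int[mu]_z (l (W w, z))%:E).
  apply: ge0_integrable.
  - exact: measurableT_comp (measurable_fun_fubini_tonelli_F _ mlE lE_ge0) _.
  - by move=> w; apply: integral_ge0 => z _; rewrite lee_fin.
  - by rewrite integral_loss_product; exact: integrable_lty prod_int.
have sample_int i : P.-integrable setT (fun w => (l (W w, tnth (S w) i))%:E).
  apply: ge0_integrable.
  - exact/measurable_EFinP/(measurableT_comp ml (measurable_fun_hyp_sample i)).
  - by move=> w; rewrite lee_fin.
  - by rewrite integral_loss_pair; exact: integrable_lty (pair_int i).
rewrite /exp_gen integralB //; last by apply: integrableZl => //; apply: integrable_sum.
rewrite integralZl ?integral_sum //; last by apply: integrable_sum.
rewrite integral_loss_product -(fineK (integrable_fin_num _ prod_int)) //.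
under eq_bigr do
  rewrite integral_loss_pair -(fineK (integrable_fin_num _ (pair_int _))) //.
by rewrite sumEFin -EFinM -EFinB.
Qed.

End generalization_error.

Theorem proposition1 (R : realType)
  (d dZ dW : measure_display)
  (Omega : measurableType d) (P : probability Omega R)
  (Z : measurableType dZ) (TW : measurableType dW)
  (mu : probability Z R) (n : nat) (n_gt0 : (0 < n)%N)
  (S : Omega -> n.-tuple Z) (mS : measurable_fun setT S)
  (W : Omega -> TW) (mW : measurable_fun setT W)
  (K : R.-pker (n.-tuple Z) ~> TW)
  (l : TW * Z -> R) (ml : measurable_fun setT l) (l_ge0 : forall x, 0 <= l x)
  (sigma : R) (sigma_ge0 : 0 <= sigma) :
  iid_sample P S mu ->
  generated_by_kernel P S W K ->
  (forall i : 'I_n,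
     subgaussian
       (mixture (pushforward P (fun w => (W w, tnth (S w) i)))
                (pushforward P W \x mu)%E)
       l sigma) ->
  (`| exp_gen P S W mu l | <= (2 * sigma * Num.sqrt (2 * ln 2))%:E)%E.
Proof.
(* Neither the i.i.d. sampling nor the kernel is needed: the bound only
   involves the laws of (W, Z_i) and of W. *)
move=> _ _ l_subg.
pose W' : {mfun Omega >-> TW} := mfun_Sub (mem_set mW).
pose WZ i := hyp_sample W' mS i.
have subg i : subgaussian
    (mixture (distribution P (WZ i)) (distribution P W' \x mu)%E) l sigma.
  exact: l_subg.
have prod_int : (distribution P W' \x mu)%E.-integrable setT (EFin \o l).
  by apply: integrable_mixturel; rewrite mixtureC; exact: (subg (Ordinal n_gt0)).1.
have pair_int i : (distribution P (WZ i)).-integrable setT (EFin \o l).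
  exact: integrable_mixturel (subg i).1.
rewrite (exp_genE ml l_ge0 prod_int pair_int) lee_fin.
apply: ler_dist_avg n_gt0 _ => i; rewrite distrC.
exact: subgaussian_mixture_dist (subg i).
Qed.
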